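(* Let $0<\mu<1$. On zero-mean functions on $\mathbb T^3$ define Fourier multipliers: $\mathcal Q$ with symbol $\widehat{\mathcal Q}(k,l,m)=\frac{\sqrt2}{\sqrt{1+\mu^2+\sqrt{(1+\mu^2)^2-4\mu^2\frac{m^2}{k^2+l^2+m^2}}}}$ (i.e. $\mathcal Q=\sqrt{2(1+\mu^2+\sqrt{(1+\mu^2)^2-4\mu^2\partial_z^2\Delta^{-1}})^{-1}}$), and $$\mathcal C=-\mathcal Q(1-\mu^2\partial_z^2\Delta^{-1}\mathcal Q^2)^{-1},\quad\mathcal A=-\mathcal C\mathcal Q^{-1},\quad\mathcal B=\partial_z^2\Delta^{-1}\mathcal C\mathcal Q,\quad\mathcal D=\mathcal Q^{-1}.$$ For a scalar function $\varphi$ define the 7-component states $$V_\alpha\varphi=\Big(\varphi,\ \mathbf 0_3,\ \mu\mathcal A\Delta^{-1}\partial_z\nabla\varphi+(0,0,-\mu\varphi+\mu^3\mathcal B\varphi)\Big),\qquad V_\beta\varphi=\Big(0,\ (\mu^2\mathcal C\Delta^{-1}\partial_z\nabla_h\varphi,\ \mathcal D\varphi),\ \mathbf 0_3\Big).$$ Then for every such $\varphi$, $$(\mathcal L_A+\mu\mathcal L_M)(V_\alpha\varphi)+\mu\mathcal Q\partial_z(V_\beta\varphi)=0=(\mathcal L_A+\mu\mathcal L_M)(V_\beta\varphi)+\mu\mathcal Q\partial_z(V_\alpha\varphi).$$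
   Context: Spatial domain $\mathbb T^3$ with coordinates $(x,y,z)$ and Fourier variables $(k,l,m)$. States are $V=(r,\mathbf u,\mathbf b)$ with $\mathbf u=(\mathbf u_h,u_3)$, $\mathbf b=(\mathbf b_h,b_3)$, $\mathbf w_h=(w_1,w_2)$. $\nabla_h=(\partial_x,\partial_y)$; $\Delta^{-1}$ is the inverse Laplacian on zero-mean functions, so $\partial_z^2\Delta^{-1}$ has symbol $m^2/(k^2+l^2+m^2)$. $\mathcal L_AV=(0,(-\nabla_hb_3+\partial_z\mathbf b_h,0),(\partial_z\mathbf u_h,-\nabla_h\cdot\mathbf u_h))$, $\mathcal L_MV=(-\nabla\cdot\mathbf u,-\nabla r,\mathbf 0)$. *)

From mathcomp Require Import all_boot all_order all_algebra.
From mathcomp Require Import complex.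
From mathcomp Require Import reals.
Set Implicit Arguments. Unset Strict Implicit. Unset Printing Implicit Defensive.
Import Order.TTheory GRing.Theory Num.Theory.
Local Open Scope ring_scope.

(* Fourier model of (distributional) functions on T^3 = (R/2piZ)^3:
   a scalar function is its family of Fourier coefficients
   phi(k,l,m), (k,l,m) in Z^3, for the modes exp(i(kx+ly+mz)). *)
Definition freq := (int * int * int)%type.
Definition kx (q : freq) : int := q.1.1.
Definition ly (q : freq) : int := q.1.2.
Definition mz (q : freq) : int := q.2.

Section Fourier.
Variable R : realType.

Definition field := freq -> R[i].

Definition zero_mean (phi : field) : Prop := phi (0, 0, 0) = 0.

Definition mult (s : freq -> R[i]) (phi : field) : field := fun q => s q * phi q.

Definition rsym (s : freq -> R) : freq -> R[i] := fun q => ((s q)%:C)%C.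

Definition dx : field -> field := mult (fun q => ('i)%C * (((kx q)%:~R)%:C)%C).
Definition dy : field -> field := mult (fun q => ('i)%C * (((ly q)%:~R)%:C)%C).
Definition dz : field -> field := mult (fun q => ('i)%C * (((mz q)%:~R)%:C)%C).

Definition ksq (q : freq) : R := ((kx q)%:~R) ^+ 2 + ((ly q)%:~R) ^+ 2 + ((mz q)%:~R) ^+ 2.

(* inverse Laplacian on zero-mean functions: symbol -1/|kappa|^2
   (the zero mode is sent to 0) *)
Definition invLap : field -> field := mult (rsym (fun q => - (ksq q)^-1)).

(* symbol of d_z^2 Delta^{-1} : m^2/(k^2+l^2+m^2) *)
Definition Psym (q : freq) : R := ((mz q)%:~R) ^+ 2 / ksq q.

Definition Qsym (mu : R) (q : freq) : R :=
  Num.sqrt 2 / Num.sqrt (1 + mu ^+ 2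
     + Num.sqrt ((1 + mu ^+ 2) ^+ 2 - 4 * mu ^+ 2 * Psym q)).
Definition Csym (mu : R) (q : freq) : R :=
  - (Qsym mu q * (1 - mu ^+ 2 * Psym q * (Qsym mu q) ^+ 2)^-1).
Definition Asym (mu : R) (q : freq) : R := - (Csym mu q * (Qsym mu q)^-1).
Definition Bsym (mu : R) (q : freq) : R := Psym q * Csym mu q * Qsym mu q.
Definition Dsym (mu : R) (q : freq) : R := (Qsym mu q)^-1.

Definition Qop mu := mult (rsym (Qsym mu)).
Definition Cop mu := mult (rsym (Csym mu)).
Definition Aop mu := mult (rsym (Asym mu)).
Definition Bop mu := mult (rsym (Bsym mu)).
Definition Dop mu := mult (rsym (Dsym mu)).

Definition addF (f g : field) : field := fun q => f q + g q.
Definition oppF (f : field) : field := fun q => - f q.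
Definition sclF (c : R) (f : field) : field := fun q => (c%:C)%C * f q.
Definition zeroF : field := fun _ => 0.

Record state := State { st_r : field; st_u1 : field; st_u2 : field; st_u3 : field;
                        st_b1 : field; st_b2 : field; st_b3 : field }.

Definition zeroS : state := State zeroF zeroF zeroF zeroF zeroF zeroF zeroF.
Definition addS (V W : state) : state :=
  State (addF (st_r V) (st_r W)) (addF (st_u1 V) (st_u1 W)) (addF (st_u2 V) (st_u2 W))
        (addF (st_u3 V) (st_u3 W)) (addF (st_b1 V) (st_b1 W)) (addF (st_b2 V) (st_b2 W))
        (addF (st_b3 V) (st_b3 W)).
Definition sclS (c : R) (V : state) : state :=
  State (sclF c (st_r V)) (sclF c (st_u1 V)) (sclF c (st_u2 V)) (sclF c (st_u3 V))
        (sclF c (st_b1 V)) (sclF c (st_b2 V)) (sclF c (st_b3 V)).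
Definition mapS (T : field -> field) (V : state) : state :=
  State (T (st_r V)) (T (st_u1 V)) (T (st_u2 V)) (T (st_u3 V))
        (T (st_b1 V)) (T (st_b2 V)) (T (st_b3 V)).

Definition LA (V : state) : state :=
  State zeroF
        (addF (oppF (dx (st_b3 V))) (dz (st_b1 V)))
        (addF (oppF (dy (st_b3 V))) (dz (st_b2 V)))
        zeroF
        (dz (st_u1 V)) (dz (st_u2 V))
        (oppF (addF (dx (st_u1 V)) (dy (st_u2 V)))).

Definition LM (V : state) : state :=
  State (oppF (addF (addF (dx (st_u1 V)) (dy (st_u2 V))) (dz (st_u3 V))))
        (oppF (dx (st_r V))) (oppF (dy (st_r V))) (oppF (dz (st_r V)))
        zeroF zeroF zeroF.

Definition Valpha (mu : R) (phi : field) : state :=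
  State phi zeroF zeroF zeroF
        (sclF mu (Aop mu (invLap (dz (dx phi)))))
        (sclF mu (Aop mu (invLap (dz (dy phi)))))
        (addF (sclF mu (Aop mu (invLap (dz (dz phi)))))
              (addF (sclF (- mu) phi) (sclF (mu ^+ 3) (Bop mu phi)))).

Definition Vbeta (mu : R) (phi : field) : state :=
  State zeroF
        (sclF (mu ^+ 2) (Cop mu (invLap (dz (dx phi)))))
        (sclF (mu ^+ 2) (Cop mu (invLap (dz (dy phi)))))
        (Dop mu phi)
        zeroF zeroF zeroF.

End Fourier.

(* At a Fourier mode (k,l,m) every operator involved is a multiplier, so both
   identities reduce, componentwise, to identities between the symbols
   P = m^2/|kappa|^2, Q, A, B, C, D.  Once the double derivatives in V_alpha and
   V_beta are composed into the real multipliers k_j m/|kappa|^2, all of them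
   but one follow from the definitions B = PCQ, D = 1/Q, A = -C/Q and
   C = -Q/(1 - mu^2 P Q^2).  The exception, the density component of the second
   identity, asks for D = Q - mu^2 C (1 - P); this is equivalent to Q^2 being a
   root of mu^2 P x^2 - (1 + mu^2) x + 1, and the formula defining Q picks the
   smaller root.  The hypothesis mu < 1 keeps 1 - mu^2 P Q^2 positive. *)

From mathcomp Require Import all_boot all_order all_algebra.
From mathcomp Require Import complex reals ring lra.
From Stdlib Require Import FunctionalExtensionality.
Import Order.TTheory GRing.Theory Num.Theory.
Local Open Scope ring_scope.

Section Symbols.
Context {R : realType} {mu : R}.

Lemma ksq_ge0 (q : freq) : 0 <= ksq R q.
Proof. by rewrite /ksq !addr_ge0 ?sqr_ge0. Qed.

Lemma ksq_eq0 (q : freq) : ksq R q = 0 -> [/\ kx q = 0, ly q = 0 & mz q = 0].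
Proof.
move/eqP; rewrite /ksq !paddr_eq0 ?addr_ge0 ?sqr_ge0 // !sqrf_eq0 !intr_eq0.
by case/andP => /andP[/eqP-> /eqP->] /eqP->.
Qed.

Lemma Psym_le1 (q : freq) : Psym R q <= 1.
Proof.
rewrite /Psym; have [->|hK] := eqVneq (ksq R q) 0; first by rewrite invr0 mulr0.
rewrite ler_pdivrMr ?mul1r; last by rewrite lt_def hK ksq_ge0.
by rewrite /ksq lerDr addr_ge0 ?sqr_ge0.
Qed.

Lemma Qsym_disc_ge0 (q : freq) : 0 <= (1 + mu ^+ 2) ^+ 2 - 4 * mu ^+ 2 * Psym R q.
Proof.
have -> : (1 + mu ^+ 2) ^+ 2 - 4 * mu ^+ 2 * Psym R q =
          (1 - mu ^+ 2) ^+ 2 + 4 * mu ^+ 2 * (1 - Psym R q) by ring.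
by rewrite addr_ge0 ?sqr_ge0 // mulr_ge0 ?subr_ge0 ?Psym_le1 // mulr_ge0 ?sqr_ge0.
Qed.

Let Qsym_den_gt0 (q : freq) :
  0 < 1 + mu ^+ 2 + Num.sqrt ((1 + mu ^+ 2) ^+ 2 - 4 * mu ^+ 2 * Psym R q).
Proof.
have := sqrtr_ge0 ((1 + mu ^+ 2) ^+ 2 - 4 * mu ^+ 2 * Psym R q).
have := sqr_ge0 mu; lra.
Qed.

Lemma Qsym_gt0 (q : freq) : 0 < Qsym mu q.
Proof. by rewrite /Qsym divr_gt0 ?sqrtr_gt0. Qed.

Lemma Qsym_sqr (q : freq) :
  Qsym mu q ^+ 2
  = 2 / (1 + mu ^+ 2 + Num.sqrt ((1 + mu ^+ 2) ^+ 2 - 4 * mu ^+ 2 * Psym R q)).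
Proof. by rewrite /Qsym expr_div_n !sqr_sqrtr // ltW. Qed.

Lemma Qsym_sqr_quadratic (q : freq) :
  mu ^+ 2 * Psym R q * (Qsym mu q ^+ 2) ^+ 2 - (1 + mu ^+ 2) * Qsym mu q ^+ 2 + 1 = 0.
Proof.
have hT := Qsym_den_gt0 q; have hS := sqr_sqrtr (Qsym_disc_ge0 q).
move: hT hS; rewrite Qsym_sqr; set S := Num.sqrt _ => hT hS.
have -> : mu ^+ 2 * Psym R q * (2 / (1 + mu ^+ 2 + S)) ^+ 2
          - (1 + mu ^+ 2) * (2 / (1 + mu ^+ 2 + S)) + 1
        = (S ^+ 2 - ((1 + mu ^+ 2) ^+ 2 - 4 * mu ^+ 2 * Psym R q))
          / (1 + mu ^+ 2 + S) ^+ 2.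
  by field; rewrite gt_eqF.
by rewrite hS subrr mul0r.
Qed.

Hypothesis mu2_lt1 : mu ^+ 2 < 1.

Lemma Csym_den_gt0 (q : freq) : 0 < 1 - mu ^+ 2 * Psym R q * Qsym mu q ^+ 2.
Proof.
rewrite subr_gt0 Qsym_sqr mulrA ltr_pdivrMr ?Qsym_den_gt0 // mul1r.
have := ler_piMr (sqr_ge0 mu) (Psym_le1 q).
have := sqrtr_ge0 ((1 + mu ^+ 2) ^+ 2 - 4 * mu ^+ 2 * Psym R q).
move: mu2_lt1; lra.
Qed.

Lemma Qsym_dz_sqr_lt_ksq (q : freq) :
  ksq R q != 0 -> (mu * (mz q)%:~R * Qsym mu q) ^+ 2 < ksq R q.
Proof.
move=> hK; have hK_gt0 : 0 < ksq R q by rewrite lt_def hK ksq_ge0.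
rewrite -subr_gt0 (_ : _ - _ = ksq R q * (1 - mu ^+ 2 * Psym R q * Qsym mu q ^+ 2)).
  by rewrite mulr_gt0 ?Csym_den_gt0.
by rewrite /Psym; field.
Qed.

Lemma Dsym_expand (q : freq) :
  Dsym mu q = Qsym mu q - mu ^+ 2 * Csym mu q * (1 - Psym R q).
Proof.
have hQ := gt_eqF (Qsym_gt0 q); have hW := gt_eqF (Csym_den_gt0 q).
apply/eqP; rewrite -subr_eq0.
have -> : Dsym mu q - (Qsym mu q - mu ^+ 2 * Csym mu q * (1 - Psym R q))
        = (mu ^+ 2 * Psym R q * (Qsym mu q ^+ 2) ^+ 2
           - (1 + mu ^+ 2) * Qsym mu q ^+ 2 + 1)
          / (Qsym mu q * (1 - mu ^+ 2 * Psym R q * Qsym mu q ^+ 2)).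
  by rewrite /Dsym /Csym; field; rewrite hQ hW.
by rewrite Qsym_sqr_quadratic mul0r.
Qed.

End Symbols.

Section Multipliers.
Context {R : realType}.

Lemma mult_comp (s t : freq -> R[i]) (f : field R) :
  mult s (mult t f) = mult (fun q => s q * t q) f.
Proof. by apply: functional_extensionality => q; rewrite /mult mulrA. Qed.

Lemma mul_iC_iC (a b : R) : ('i%C * a%:C%C) * ('i%C * b%:C%C) = (- (a * b))%:C%C.
Proof. by rewrite mulrACA -expr2 sqr_i mulN1r -rmorphM -rmorphN. Qed.

Lemma invLap_dz_derivE (a : freq -> int) (f : field R) :
  invLap (dz (mult (fun q => 'i%C * ((a q)%:~R)%:C%C) f))
  = mult (rsym (fun q => (a q)%:~R * (mz q)%:~R / ksq R q)) f.
Proof.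
rewrite /invLap /dz !mult_comp; congr mult; apply: functional_extensionality => q.
by rewrite /rsym -mulrA mul_iC_iC -rmorphM mulrNN mulrC (mulrC (mz q)%:~R).
Qed.

End Multipliers.

Theorem lemma2p2 (R : realType) (mu : R) (hmu0 : 0 < mu) (hmu1 : mu < 1)
  (phi : field R) (hphi : zero_mean phi) :
  addS (addS (LA (Valpha mu phi)) (sclS mu (LM (Valpha mu phi))))
       (sclS mu (mapS (fun f => Qop mu (dz f)) (Vbeta mu phi))) = zeroS R
  /\
  addS (addS (LA (Vbeta mu phi)) (sclS mu (LM (Vbeta mu phi))))
       (sclS mu (mapS (fun f => Qop mu (dz f)) (Valpha mu phi))) = zeroS R.
Proof.
have mu2_lt1 : mu ^+ 2 < 1 by rewrite expr_lt1 // ltW.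
rewrite /Valpha /Vbeta !(invLap_dz_derivE kx) !(invLap_dz_derivE ly) !(invLap_dz_derivE mz).
split; last rewrite /Dop (functional_extensionality _ _ (Dsym_expand mu2_lt1)).
all: rewrite /addS /sclS /mapS /LA /LM /=; congr State; apply: functional_extensionality => q.
all: rewrite /addF /oppF /sclF /zeroF /Qop /Aop /Bop /Cop /Dop /dx /dy /dz /mult /rsym /=.
all: have [/ksq_eq0 [hk hl hm] | hK] := eqVneq (ksq R q) 0; first by rewrite ?hk ?hl ?hm; ring.
all: move: hK (Qsym_gt0 (mu := mu) q) (Qsym_dz_sqr_lt_ksq mu2_lt1 q hK).
all: rewrite /Asym /Bsym /Csym /Dsym /Psym /ksq.
all: move: ((kx q)%:~R : R) ((ly q)%:~R : R) ((mz q)%:~R : R) (Qsym mu q) => k l m Q hK hQ hKW.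
(* field states its side conditions in R[i]; fold the casts back into R. *)
all: field; rewrite -?rmorphXn -?rmorphM -?rmorphXn -?rmorphD -?rmorphB ?fmorph_eq0.
all: by rewrite ?hK ?subr_eq0 ?(gt_eqF hQ) ?(gt_eqF hKW).
Qed.
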